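(* Let $\pi\in\mathfrak{S}_n$ avoid $231$. Let $A,B,C$ be the blocks of a collection of crossing $3$-cycles of $\pi$ (so $A<B<C$), and let $(e,f)$ with $e<f$ be a $2$-cycle of $\pi$. Then one of the following holds: (1) $f<A$; (2) $A<e<f<B$; (3) $A<e<B<f<C$; (4) $B<e<f<C$; (5) $C<e$.
   Context: A permutation avoids $231$ if there are no indices $i<j<k$ with $\pi_k<\pi_i<\pi_j$. A collection of crossing $3$-cycles of $\pi$ is a nonempty set of $3$-cycles $(a_i,c_i,b_i)$ (meaning $a_i\mapsto c_i\mapsto b_i\mapsto a_i$) of $\pi$, $i=1,\dots,p$, with $a_i<b_i<c_i$, such that $a_i<b_j<c_k$ for all $i,j,k$; its blocks are $A=\{a_i\}$, $B=\{b_i\}$, $C=\{c_i\}$. For sets $S,T$ and an element $t$, $S<T$ means $s<t'$ for all $s\in S,t'\in T$, and $S<t$ (resp. $t<S$) means $s<t$ (resp. $t<s$) for all $s\in S$. *)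

From mathcomp Require Import all_boot all_order all_fingroup.
Set Implicit Arguments. Unset Strict Implicit. Unset Printing Implicit Defensive.

(* Permutations of {1..n} are modelled as elements of 'S_n acting on 'I_n
   (positions 0..n-1); the order on 'I_n is the usual one on nat. *)

Definition avoids231 (n : nat) (pi : 'S_n) : Prop :=
  ~ exists i j k : 'I_n, [/\ i < j, j < k & pi k < pi i < pi j].

(* A 3-cycle (a,c,b) of pi with a<b<c: a |-> c |-> b |-> a.
   A triple t = (a,b,c). *)
Definition is_3cycle_abc (n : nat) (pi : 'S_n) (t : 'I_n * 'I_n * 'I_n) : Prop :=
  let: (a, b, c) := t in
  [/\ a < b, b < c, pi a = c, pi c = b & pi b = a].

Definition crossing_collection (n : nat) (pi : 'S_n)
    (S : {set 'I_n * 'I_n * 'I_n}) : Prop :=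
  [/\ S != set0,
      (forall t, t \in S -> is_3cycle_abc pi t) &
      (forall t1 t2 t3, t1 \in S -> t2 \in S -> t3 \in S ->
         t1.1.1 < t2.1.2 < t3.2)].

Definition blockA n (S : {set 'I_n * 'I_n * 'I_n}) : {set 'I_n} :=
  [set t.1.1 | t in S].
Definition blockB n (S : {set 'I_n * 'I_n * 'I_n}) : {set 'I_n} :=
  [set t.1.2 | t in S].
Definition blockC n (S : {set 'I_n * 'I_n * 'I_n}) : {set 'I_n} :=
  [set t.2 | t in S].

Definition set_lt_elt n (X : {set 'I_n}) (t : 'I_n) : Prop :=
  forall x, x \in X -> x < t.
Definition elt_lt_set n (t : 'I_n) (X : {set 'I_n}) : Prop :=
  forall x, x \in X -> t < x.

From mathcomp Require Import all_boot all_order all_fingroup.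
From mathcomp Require Import zify.
Set Implicit Arguments. Unset Strict Implicit. Unset Printing Implicit Defensive.

(* Each step excludes an occurrence of 231 among the points of the
   transposition (e f) and of at most two 3-cycles of the collection.  For a
   single 3-cycle this leaves only the five listed positions of e < f.  For two
   3-cycles it shows that neither e nor f lies strictly between two points of
   the same block, so the position read off from one 3-cycle extends to the
   whole blocks. *)

Lemma uniform_side n (X : {set 'I_n}) (z x : 'I_n) :
  {in X &, forall y y' : 'I_n, y < z -> y' < z} -> z \notin X -> x \in X ->
  (z < x -> elt_lt_set z X) /\ (x < z -> set_lt_elt X z).
Proof.
move=> uniform zX xX; split=> [zx y yX | xz y yX]; last exact: uniform xz.
case: (ltngtP z y) => // [yz | /ord_inj zy]; last by rewrite zy yX in zX.
by have := uniform _ _ yX xX yz; lia.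
Qed.

Section Avoid231.

Variables (n : nat) (pi : 'S_n).
Hypothesis avoid : avoids231 pi.

Lemma no231 (i j k x y z : 'I_n) : pi i = x -> pi j = y -> pi k = z ->
  i < j -> j < k -> z < x -> x < y -> False.
Proof.
move=> <- <- <- ij jk zx xy; apply: avoid.
by exists i, j, k; rewrite ij jk zx xy.
Qed.

Lemma is_3cycle_eq a b c a' b' c' :
  is_3cycle_abc pi (a, b, c) -> is_3cycle_abc pi (a', b', c') ->
  (a = a' :> nat <-> b = b' :> nat) /\ (c = c' :> nat <-> b = b' :> nat).
Proof.
case=> _ _ _ pc pb [_ _ _ pc' pb'].
have eq_pi x y : pi x = pi y -> x = y :> nat by move/perm_inj->.
split; split=> /ord_inj E.
- by apply: eq_pi; rewrite pb pb' E.
- by rewrite -pb -pb' E.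
- by rewrite -pc -pc' E.
- by apply: eq_pi; rewrite pc pc' E.
Qed.

Lemma involutive_notin_3cycle a b c z :
  is_3cycle_abc pi (a, b, c) -> pi (pi z) = z ->
  [/\ z != a :> nat, z != b :> nat & z != c :> nat].
Proof.
case=> ab bc pa pc pb zz; split; apply/eqP=> /ord_inj zE; subst z.
- by rewrite pa pc in zz; rewrite zz ltnn in ab.
- by rewrite pb pa in zz; rewrite zz ltnn in bc.
- by rewrite pc pb in zz; have := ltn_trans ab bc; rewrite zz ltnn.
Qed.

Variable S : {set 'I_n * 'I_n * 'I_n}.
Hypothesis crossS : crossing_collection pi S.

Lemma crossing_3cycle t : t \in S -> is_3cycle_abc pi t.
Proof. by case: crossS => _ cyc _; exact: cyc. Qed.

Lemma crossing_lt a b c a' b' c' : (a, b, c) \in S -> (a', b', c') \in S ->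
  a < b' /\ b < c'.
Proof.
case: crossS => _ _ lt tS t'S.
have /andP[-> _] := lt _ _ _ tS t'S t'S.
by have /andP[_ ->] := lt _ _ _ tS tS t'S.
Qed.

Lemma crossing_nested a b c a' b' c' : (a, b, c) \in S -> (a', b', c') \in S ->
  a < a' -> c' < c.
Proof.
move=> tS t'S.
have [_ _ pa _ _] := crossing_3cycle tS.
have [ab' _ pa' _ pb'] := crossing_3cycle t'S.
have := is_3cycle_eq (crossing_3cycle tS) (crossing_3cycle t'S).
have := crossing_lt t'S tS.
have := no231 pa pa' pb'.
lia.
Qed.

Lemma notin_blocks z : pi (pi z) = z ->
  [/\ z \notin blockA S, z \notin blockB S & z \notin blockC S].
Proof.
move=> zz; split; apply/imsetP=> -[[[a b] c] tS /= zE];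
by have [] := involutive_notin_3cycle (crossing_3cycle tS) zz; rewrite zE eqxx.
Qed.

Variables (e f : 'I_n).
Hypotheses (ef : e < f) (pe : pi e = f) (pf : pi f = e).

Lemma transposition_3cycle_position a b c : is_3cycle_abc pi (a, b, c) ->
  f < a \/ (a < e /\ f < b) \/ (a < e /\ e < b /\ b < f /\ f < c) \/
  (b < e /\ f < c) \/ c < e.
Proof.
move=> abc.
have [ea eb ec] := involutive_notin_3cycle abc (etrans (congr1 pi pe) pf).
have [fa fb fc] := involutive_notin_3cycle abc (etrans (congr1 pi pf) pe).
have [ab bc pa pc pb] := abc.
have := no231 pe pa pb; have := no231 pb pc pf; have := no231 pa pe pc.
lia.
Qed.

Lemma crossing_a_below a b c a' b' c' : (a, b, c) \in S -> (a', b', c') \in S ->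
  a < f -> a' < e.
Proof.
move=> tS t'S.
have := transposition_3cycle_position (crossing_3cycle tS).
have := transposition_3cycle_position (crossing_3cycle t'S).
have [_ _ _ _ pb] := crossing_3cycle tS.
have [ab' bc' pa' _ _] := crossing_3cycle t'S.
have := crossing_lt t'S tS.
have := no231 pe pa' pb.
lia.
Qed.

Lemma crossing_b_below a b c a' b' c' : (a, b, c) \in S -> (a', b', c') \in S ->
  (b < e -> b' < e) /\ (b < f -> b' < f).
Proof.
move=> tS t'S.
have := transposition_3cycle_position (crossing_3cycle tS).
have := transposition_3cycle_position (crossing_3cycle t'S).
have [ab bc _ pc pb] := crossing_3cycle tS.
have [ab' bc' _ pc' pb'] := crossing_3cycle t'S.
have := is_3cycle_eq (crossing_3cycle tS) (crossing_3cycle t'S).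
have := crossing_nested tS t'S; have := crossing_nested t'S tS.
have := crossing_lt tS t'S; have := crossing_lt t'S tS.
(* For z in {e, f} with z' the other point, the occurrence of 231 is
   (b, z, b') if a' < a and (z', c', c) if a < a'. *)
split.
- have := no231 pb pe pb'; have := no231 pf pc' pc; lia.
- have := no231 pb pf pb'; have := no231 pe pc' pc; lia.
Qed.

Lemma crossing_c_below a b c a' b' c' : (a, b, c) \in S -> (a', b', c') \in S ->
  c < f -> c' < e.
Proof.
move=> tS t'S.
have := transposition_3cycle_position (crossing_3cycle tS).
have := transposition_3cycle_position (crossing_3cycle t'S).
have [ab bc pa _ _] := crossing_3cycle tS.
have [ab' bc' _ pc' _] := crossing_3cycle t'S.
have := crossing_lt t'S tS.
have := no231 pa pe pc'.
lia.
Qed.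

Lemma transposition_blocks_uniform z : z = e \/ z = f -> [/\
  {in blockA S &, forall x x' : 'I_n, x < z -> x' < z},
  {in blockB S &, forall x x' : 'I_n, x < z -> x' < z} &
  {in blockC S &, forall x x' : 'I_n, x < z -> x' < z}].
Proof.
move=> zef; split=> _ _
  /imsetP[[[a b] c] tS ->] /imsetP[[[a' b'] c'] t'S ->] /=.
- have := crossing_a_below tS t'S; case: zef => ->; lia.
- have := crossing_b_below tS t'S; case: zef => ->; lia.
- have := crossing_c_below tS t'S; case: zef => ->; lia.
Qed.

End Avoid231.

Theorem lemma3p4 (n : nat) (pi : 'S_n) (S : {set 'I_n * 'I_n * 'I_n})
    (e f : 'I_n) :
  avoids231 pi ->
  crossing_collection pi S ->
  e < f -> pi e = f -> pi f = e ->
  let A := blockA S in let B := blockB S in let C := blockC S in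
  elt_lt_set f A \/
  [/\ set_lt_elt A e, e < f & elt_lt_set f B] \/
  [/\ set_lt_elt A e, elt_lt_set e B, set_lt_elt B f & elt_lt_set f C] \/
  [/\ set_lt_elt B e, e < f & elt_lt_set f C] \/
  set_lt_elt C e.
Proof.
move=> avoid crossS ef pe pf A B C.
have [[[a b] c] tS] : exists t, t \in S by case: crossS => /set0Pn.
have aA : a \in A by apply/imsetP; exists (a, b, c).
have bB : b \in B by apply/imsetP; exists (a, b, c).
have cC : c \in C by apply/imsetP; exists (a, b, c).
have [nAe nBe nCe] := notin_blocks crossS (etrans (congr1 pi pe) pf).
have [nAf nBf nCf] := notin_blocks crossS (etrans (congr1 pi pf) pe).
have [uAe uBe uCe] :=
  transposition_blocks_uniform avoid crossS ef pe pf (or_introl erefl).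
have [uAf uBf uCf] :=
  transposition_blocks_uniform avoid crossS ef pe pf (or_intror erefl).
have [_ Ae] := uniform_side uAe nAe aA.
have [fA _] := uniform_side uAf nAf aA.
have [eB Be] := uniform_side uBe nBe bB.
have [fB Bf] := uniform_side uBf nBf bB.
have [_ Ce] := uniform_side uCe nCe cC.
have [fC _] := uniform_side uCf nCf cC.
have := transposition_3cycle_position avoid ef pe pf
  (crossing_3cycle crossS tS).
case=> [fa | [[ae fb] | [[ae [eb [bf fc]]] | [[be fc] | ce]]]].
- by left; apply: fA.
- by right; left; split; [apply: Ae | | apply: fB].
- by right; right; left; split; [apply: Ae | apply: eB | apply: Bf | apply: fC].
- by right; right; right; left; split; [apply: Be | | apply: fC].
- by right; right; right; right; apply: Ce.
Qed.
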